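(* If $\dim\mathcal H=\dim\mathcal J=\infty$, then $\mathcal T(\mathcal H)\hat\otimes\mathcal T(\mathcal J)\subsetneq\mathcal T(\mathcal H\otimes\mathcal J)$; in particular $\hat{\mathcal S}(\mathcal H\otimes\mathcal J)\subsetneq\mathcal S(\mathcal H\otimes\mathcal J)$, i.e. there exist density operators on $\mathcal H\otimes\mathcal J$ that are not cross states.
   Context: $\mathcal H,\mathcal J$ separable complex Hilbert spaces; $\mathcal T(\cdot)$ trace class with trace norm $\|\cdot\|_1$; $\mathcal S(\cdot)$ density operators. The cross trace class $\mathcal T(\mathcal H)\hat\otimes\mathcal T(\mathcal J)$ is the set of $C\in\mathcal T(\mathcal H\otimes\mathcal J)$ admitting an expansion $C=\sum_kr_kX_k\otimes Y_k$ (trace-norm convergent) with $r_k\ge0$, $\sum r_k<\infty$, $X_k\in\mathcal T(\mathcal H)$, $Y_k\in\mathcal T(\mathcal J)$, $\|X_k\|_1\|Y_k\|_1=1$. $\hat{\mathcal S}(\mathcal H\otimes\mathcal J)=\mathcal S(\mathcal H\otimes\mathcal J)\cap(\mathcal T(\mathcal H)\hat\otimes\mathcal T(\mathcal J))$ (cross states). *)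

From Stdlib Require Import Reals Cantor.
From Coquelicot Require Import Coquelicot.

Open Scope R_scope.

(* Hilbert spaces l^2(I) over C, for a countable index type I given    *)
(* together with an enumeration en : nat -> I (a bijection in all      *)
(* instances below) and a decidable equality (to form the standard     *)
(* orthonormal basis).                                                 *)
(* Every infinite-dimensional separable complex Hilbert space is        *)
(* unitarily isomorphic to l^2(nat); H (x) J is then l^2(nat * nat).    *)

Definition vec (I : Type) := I -> C.
Definition op (I : Type) := vec I -> vec I.

Section L2.
Variables (I : Type) (en : nat -> I) (dec : forall a b : I, {a = b} + {a <> b}).

Definition l2 (x : vec I) : Prop := ex_series (fun n => (Cmod (x (en n)))^2).

Definition l2norm (x : vec I) : R := sqrt (Series (fun n => (Cmod (x (en n)))^2)).

(* inner product <x, y> = sum_i conj(x_i) y_i (antilinear in the first slot) *)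
Definition ip (x y : vec I) : C :=
  (Series (fun n => Re (Cmult (Cconj (x (en n))) (y (en n)))),
   Series (fun n => Im (Cmult (Cconj (x (en n))) (y (en n))))).

Definition vadd (x y : vec I) : vec I := fun i => Cplus (x i) (y i).
Definition vscal (a : C) (x : vec I) : vec I := fun i => Cmult a (x i).

Definition ebasis (i : I) : vec I := fun j => if dec i j then RtoC 1 else RtoC 0.

(* bounded linear operator on l^2(I) (only its action on l^2 matters) *)
Definition is_linear (A : op I) : Prop :=
  forall x y a, l2 x -> l2 y ->
    forall i, A (vadd x (vscal a y)) i = Cplus (A x i) (Cmult a (A y i)).

Definition is_bounded (A : op I) : Prop :=
  (forall x, l2 x -> l2 (A x)) /\
  exists M, forall x, l2 x -> l2norm (A x) <= M * l2norm x.

Definition bop (A : op I) : Prop := is_linear A /\ is_bounded A.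

Definition adjoint (A B : op I) : Prop :=
  bop B /\ forall x y, l2 x -> l2 y -> ip (B x) y = ip x (A y).

Definition positive (P : op I) : Prop :=
  forall x, l2 x -> Im (ip x (P x)) = 0 /\ 0 <= Re (ip x (P x)).

(* trace norm: ||A||_1 = Tr |A| where |A| = (A^* A)^{1/2} is the (unique)
   positive square root of A^* A, and Tr is computed in the standard basis. *)
Definition tnorm (A : op I) (t : R) : Prop :=
  bop A /\
  exists B P : op I,
    adjoint A B /\ bop P /\ positive P /\
    (forall x, l2 x -> forall i, P (P x) i = B (A x) i) /\
    is_series (fun n => Re (ip (ebasis (en n)) (P (ebasis (en n))))) t.

Definition trace_class (A : op I) : Prop := exists t, tnorm A t.

Definition has_trace (A : op I) (tau : C) : Prop :=
  is_series (fun n => Re (ip (ebasis (en n)) (A (ebasis (en n))))) (Re tau) /\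
  is_series (fun n => Im (ip (ebasis (en n)) (A (ebasis (en n))))) (Im tau).

Definition density (rho : op I) : Prop :=
  trace_class rho /\ positive rho /\ has_trace rho (RtoC 1).

Definition osub (A B : op I) : op I := fun x i => Cminus (A x i) (B x i).

End L2.

Definition nat_dec : forall a b : nat, {a = b} + {a <> b} := Nat.eq_dec.

Definition pair_dec : forall a b : nat * nat, {a = b} + {a <> b}.
Proof. decide equality; apply Nat.eq_dec. Defined.

Definition TC1 (A : op nat) := trace_class nat (fun n : nat => n) nat_dec A.
Definition tnorm1 (A : op nat) (t : R) := tnorm nat (fun n : nat => n) nat_dec A t.

Definition TC2 (A : op (nat * nat)) := trace_class (nat * nat) Cantor.of_nat pair_dec A.
Definition tnorm2 (A : op (nat * nat)) (t : R) := tnorm (nat * nat) Cantor.of_nat pair_dec A t.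
Definition density2 (rho : op (nat * nat)) := density (nat * nat) Cantor.of_nat pair_dec rho.

(* X (x) Y on l^2(nat * nat): (X (x) Y) = (X (x) 1)(1 (x) Y) *)
Definition tens (X Y : op nat) : op (nat * nat) :=
  fun x p => let (i, j) := p in X (fun i' => Y (fun j' => x (i', j')) j) i.

Fixpoint psum (r : nat -> R) (X Y : nat -> op nat) (N : nat) : op (nat * nat) :=
  match N with
  | O => fun _ _ => RtoC 0
  | S N' => fun x p => Cplus (psum r X Y N' x p) (Cmult (RtoC (r N')) (tens (X N') (Y N') x p))
  end.

Definition cross (Cop : op (nat * nat)) : Prop :=
  TC2 Cop /\
  exists (r : nat -> R) (X Y : nat -> op nat),
    (forall k, 0 <= r k) /\ ex_series r /\
    (forall k, exists a b, tnorm1 (X k) a /\ tnorm1 (Y k) b /\ a * b = 1) /\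
    (forall eps, 0 < eps -> exists N0, forall N, (N0 <= N)%nat ->
       exists t, tnorm2 (osub (nat * nat) Cop (psum r X Y N)) t /\ t < eps).

Definition cross_state (rho : op (nat * nat)) : Prop := density2 rho /\ cross rho.

(* A product X (x) Y pairs with the unnormalised maximally entangled vector
   Omega_N = sum_(m <= N) e_m (x) e_m as
     |<Omega_N, (X (x) Y) Omega_N>| = |sum_(m, n <= N) <e_n, X e_m> <e_n, Y e_m>| <= ||X||_2 ||Y||_2,
   and the Hilbert-Schmidt norm is dominated by the trace norm.  Every entry of an operator
   is dominated by its trace norm too, so |<Omega_N, R Omega_N>| <= (N+1)^2 ||R||_1.  Hence if
   C = sum_k r_k X_k (x) Y_k, cutting the expansion where the remainder has trace norm below
   (N+1)^-2 shows |<Omega_N, C Omega_N>| <= sum_k r_k + 1 for every N.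
   On the other hand the pure state rho = |psi><psi| with psi = sum_m c_m e_m (x) e_m and
   c_m proportional to 1/(m+1) satisfies <Omega_N, rho Omega_N> = (sum_(m <= N) c_m)^2, which
   diverges with the harmonic series; so rho is a density operator that is not a cross state. *)

From Pilot Require Import Defs.
From Stdlib Require Import Reals Lra Lia Cantor FunctionalExtensionality Classical.
From Coquelicot Require Import Coquelicot.
(* Coquelicot and the Stdlib shadow [Defs.bop] and [Defs.positive]. *)
Import Defs.
Open Scope R_scope.

Lemma sum_n_SR (f : nat -> R) N : sum_n f (S N) = sum_n f N + f (S N).
Proof. rewrite sum_Sn; reflexivity. Qed.

Lemma sum_n_SC (f : nat -> C) N : sum_n f (S N) = (sum_n f N + f (S N))%C.
Proof. rewrite sum_Sn; reflexivity. Qed.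

Lemma sum_n_le (f g : nat -> R) N : (forall n, f n <= g n) -> sum_n f N <= sum_n g N.
Proof. apply sum_n_m_le. Qed.

Lemma sum_n_lin (f g : nat -> R) c d N :
  sum_n (fun n => c * f n + d * g n) N = c * sum_n f N + d * sum_n g N :> R.
Proof.
  induction N as [|N IH]; [rewrite !sum_O; reflexivity|].
  rewrite !sum_n_SR, IH. ring.
Qed.

Lemma sum_n_Clin (f g : nat -> C) c N :
  sum_n (fun n => f n + c * g n)%C N = (sum_n f N + c * sum_n g N)%C :> C.
Proof.
  induction N as [|N IH]; [rewrite !sum_O; reflexivity|].
  rewrite !sum_n_SC, IH. ring.
Qed.

Lemma sum_n_RtoC (f : nat -> R) N : sum_n (fun n => RtoC (f n)) N = RtoC (sum_n f N).
Proof.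
  induction N as [|N IH]; [rewrite !sum_O; reflexivity|].
  rewrite sum_n_SC, sum_n_SR, IH. apply injective_projections; simpl; ring.
Qed.

Lemma sum_n_Cmod_le (f : nat -> C) N : Cmod (sum_n f N) <= sum_n (fun n => Cmod (f n)) N.
Proof.
  induction N as [|N IH].
  - rewrite !sum_O; lra.
  - rewrite sum_n_SC, sum_n_SR. eapply Rle_trans; [apply Cmod_triangle|lra].
Qed.

Lemma sum_n_single (f : nat -> R) k N :
  (forall m, m <> k -> f m = 0) -> sum_n f N = (if Nat.leb k N then f k else 0) :> R.
Proof.
  intros Hf. induction N as [|N IH].
  - rewrite sum_O. destruct (Nat.leb_spec k 0); [replace k with 0%nat by lia; reflexivity|].
    apply Hf; lia.
  - rewrite sum_n_SR, IH.
    destruct (Nat.leb_spec k N), (Nat.leb_spec k (S N)); try lia.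
    + rewrite (Hf (S N)) by lia. ring.
    + replace k with (S N) by lia. ring.
    + rewrite (Hf (S N)) by lia. ring.
Qed.

Lemma sum_n_gap (b : nat -> R) M M' : (M < M')%nat ->
  (forall j, (M < j < M')%nat -> b j = 0) -> sum_n b M' = sum_n b M + b M' :> R.
Proof.
  induction M' as [|M' IH]; intros HM Hb; [lia|]. rewrite sum_n_SR.
  destruct (Nat.eq_dec M M') as [<-|HMM']; [reflexivity|].
  rewrite IH, (Hb M') by (lia || (intros; apply Hb; lia)). ring.
Qed.

Lemma is_series_single (f : nat -> R) k : (forall m, m <> k -> f m = 0) -> is_series f (f k).
Proof.
  intros Hf. enough (H : is_lim_seq (sum_n f) (f k)) by exact H.
  apply (is_lim_seq_ext_loc (fun _ => f k)); [|apply is_lim_seq_const].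
  exists k; intros N HN. rewrite (sum_n_single f k N Hf).
  apply Nat.leb_le in HN; rewrite HN; reflexivity.
Qed.

Lemma is_series_zero : is_series (fun _ : nat => 0) 0.
Proof. exact (is_series_single (fun _ => 0) 0%nat (fun _ _ => eq_refl)). Qed.

Lemma sum_n_le_is_series (f : nat -> R) l N : (forall n, 0 <= f n) -> is_series f l -> sum_n f N <= l.
Proof.
  intros Hf Hl. apply (is_lim_seq_incr_compare (sum_n f) l Hl).
  intro n; rewrite sum_n_SR; specialize (Hf (S n)); lra.
Qed.

Lemma term_le_is_series (f : nat -> R) l k : (forall n, 0 <= f n) -> is_series f l -> f k <= l.
Proof.
  intros Hf Hl. eapply Rle_trans; [|apply (sum_n_le_is_series f l k Hf Hl)].
  destruct k; [rewrite sum_O; lra|]. rewrite sum_n_SR.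
  assert (0 <= sum_n f k) by (rewrite sum_n_Reals; apply cond_pos_sum; auto).
  lra.
Qed.

Lemma Series_nonneg (f : nat -> R) : (forall n, 0 <= f n) -> ex_series f -> 0 <= Series f.
Proof.
  intros Hf Hs. apply Rle_trans with (f 0%nat); [apply Hf|].
  apply term_le_is_series; [exact Hf|apply Series_correct, Hs].
Qed.

Lemma Series_lin (a b : nat -> R) c d : ex_series a -> ex_series b ->
  Series (fun n => c * a n + d * b n) = c * Series a + d * Series b.
Proof.
  intros Ha Hb. rewrite Series_plus, !Series_scal_l; auto using ex_series_scal_l.
Qed.

Lemma ex_series_lin (a b : nat -> R) c d : ex_series a -> ex_series b ->
  ex_series (fun n => c * a n + d * b n).
Proof.
  intros [la Ha] [lb Hb]. exists (c * la + d * lb).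
  apply (is_series_plus (fun n => c * a n) (fun n => d * b n)).
  - exact (is_series_scal_l c a la Ha).
  - exact (is_series_scal_l d b lb Hb).
Qed.

Lemma ex_series_nonneg_le (a b : nat -> R) : (forall n, 0 <= a n <= b n) -> ex_series b -> ex_series a.
Proof.
  intros H. apply (ex_series_le a b). intro n. destruct (H n).
  change norm with Rabs; simpl. rewrite Rabs_pos_eq; assumption.
Qed.

Lemma ex_series_nonneg_bounded (f : nat -> R) M :
  (forall n, 0 <= f n) -> (forall N, sum_n f N <= M) -> ex_series f.
Proof.
  intros Hf HM. destruct (ex_finite_lim_seq_incr (sum_n f) M) as [l Hl]; [|exact HM|exists l; exact Hl].
  intro n; rewrite sum_n_SR; specialize (Hf (S n)); lra.
Qed.

Section Sparse.
Variables (a b : nat -> R) (s : nat -> nat).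
Hypotheses (s_incr : forall k, (s k < s (S k))%nat) (b_s : forall k, b (s k) = a k)
  (b_off : forall m, (forall k, m <> s k) -> b m = 0).

Lemma sparse_mono k1 k2 : (k1 <= k2)%nat -> (s k1 <= s k2)%nat.
Proof. intros H. induction H as [|k2 _ IH]; [lia|]. specialize (s_incr k2). lia. Qed.

Lemma sparse_head j : (j < s 0%nat)%nat -> b j = 0.
Proof. intros Hj. apply b_off. intros k ->. pose proof (sparse_mono 0 k). lia. Qed.

Lemma sparse_gap k j : (s k < j < s (S k))%nat -> b j = 0.
Proof.
  intros Hj. apply b_off. intros k' ->.
  destruct (Nat.le_gt_cases k' k) as [H|H]; apply sparse_mono in H; lia.
Qed.

Lemma sum_n_sparse K : sum_n b (s K) = sum_n a K :> R.
Proof.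
  induction K as [|K IH].
  - destruct (Nat.eq_0_gt_0_cases (s 0%nat)) as [H0|Hpos].
    + rewrite sum_O, <- b_s, H0, sum_O. reflexivity.
    + rewrite (sum_n_gap b 0 (s 0%nat)), !sum_O, b_s, sparse_head by
        (lia || (intros; apply sparse_head; lia)). ring.
  - rewrite (sum_n_gap b (s K)), IH, b_s, sum_n_SR; [reflexivity|apply s_incr|apply sparse_gap].
Qed.

Lemma is_series_sparse L : (forall n, 0 <= a n) -> is_series a L -> is_series b L.
Proof.
  intros Ha HL.
  assert (Hb : forall m, 0 <= b m).
  { intro m. destruct (classic (exists k, m = s k)) as [[k ->]|Hm].
    - rewrite b_s; apply Ha.
    - rewrite b_off; [lra|]. intros k ->; apply Hm; exists k; reflexivity. }
  assert (Hincr : forall n, sum_n b n <= sum_n b (S n))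
    by (intro n; rewrite sum_n_SR; specialize (Hb (S n)); lra).
  assert (Hlim : Lim_seq (sum_n b) = L).
  { rewrite <- (Lim_seq_subseq _ s (eventually_subseq s s_incr) (ex_lim_seq_incr _ Hincr)).
    rewrite (Lim_seq_ext _ (sum_n a)) by exact sum_n_sparse.
    apply is_lim_seq_unique, HL. }
  pose proof (Lim_seq_correct _ (ex_lim_seq_incr _ Hincr)) as H.
  rewrite Hlim in H. exact H.
Qed.

End Sparse.

Lemma le_of_quadratic_nonneg A B q : 0 <= A -> 0 <= B -> 0 <= q ->
  (forall l, 0 <= A - 2 * l * q + l ^ 2 * q * B) -> q <= A * B.
Proof.
  intros HA HB Hq H. destruct (Rle_lt_or_eq_dec 0 B HB) as [Bpos|<-].
  - specialize (H (/ B)). apply Rmult_le_reg_r with (/ B); [apply Rinv_0_lt_compat; lra|].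
    replace (A * B * / B) with A by (field; lra).
    replace (A - 2 * / B * q + (/ B) ^ 2 * q * B) with (A - q * / B) in H by (field; lra). lra.
  - destruct (Rle_lt_or_eq_dec 0 q Hq) as [qpos|<-]; [|lra].
    specialize (H ((A + 1) / (2 * q))).
    replace (A - 2 * ((A + 1) / (2 * q)) * q + ((A + 1) / (2 * q)) ^ 2 * q * 0) with (-1) in H
      by (field; lra). lra.
Qed.

Lemma Cconj_RtoC (r : R) : Cconj (RtoC r) = RtoC r.
Proof. apply injective_projections; simpl; ring. Qed.

Definition Cseries (f : nat -> C) : C := (Series (fun n => Re (f n)), Series (fun n => Im (f n))).

Lemma Cseries_ext (f g : nat -> C) : (forall n, f n = g n) -> Cseries f = Cseries g.
Proof. intros H. unfold Cseries. f_equal; apply Series_ext; intro n; rewrite H; reflexivity. Qed.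

Lemma ex_series_Re (f : nat -> C) : ex_series (fun n => Cmod (f n)) -> ex_series (fun n => Re (f n)).
Proof. apply (ex_series_le (fun n => Re (f n))); intro n. apply re_le_Cmod. Qed.

Lemma ex_series_Im (f : nat -> C) : ex_series (fun n => Cmod (f n)) -> ex_series (fun n => Im (f n)).
Proof.
  apply (ex_series_le (fun n => Im (f n))); intro n.
  eapply Rle_trans; [apply Rmax_r|apply Rmax_Cmod].
Qed.

Lemma Cseries_plus (f g : nat -> C) :
  ex_series (fun n => Cmod (f n)) -> ex_series (fun n => Cmod (g n)) ->
  Cseries (fun n => f n + g n)%C = (Cseries f + Cseries g)%C.
Proof.
  intros Hf Hg. unfold Cseries. apply injective_projections; simpl;
    rewrite <- Series_plus; auto using ex_series_Re, ex_series_Im.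
Qed.

Lemma Cseries_scal (c : C) (f : nat -> C) : ex_series (fun n => Cmod (f n)) ->
  Cseries (fun n => c * f n)%C = (c * Cseries f)%C.
Proof.
  intros Hf. pose proof (ex_series_Re f Hf). pose proof (ex_series_Im f Hf).
  unfold Cseries.
  rewrite (Series_ext (fun n => Re (c * f n)%C) (fun n => Re c * Re (f n) + (- Im c) * Im (f n)))
    by (intro; rewrite re_mult; ring).
  rewrite (Series_ext (fun n => Im (c * f n)%C) (fun n => Re c * Im (f n) + Im c * Re (f n)))
    by (intro; rewrite im_mult; ring).
  rewrite !Series_lin by auto. apply injective_projections; unfold Re, Im; simpl; ring.
Qed.

Lemma Cseries_conj (f : nat -> C) : Cseries (fun n => Cconj (f n)) = Cconj (Cseries f).
Proof.
  unfold Cseries. apply injective_projections; simpl; [reflexivity|].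
  rewrite <- Series_opp. reflexivity.
Qed.

Lemma Cseries_RtoC (f : nat -> R) : Cseries (fun n => RtoC (f n)) = RtoC (Series f).
Proof.
  unfold Cseries. apply injective_projections; cbn [fst snd]; [reflexivity|].
  rewrite (Series_ext _ (fun n => 0 * f n)) by (intro; unfold Im; simpl; ring).
  rewrite Series_scal_l; simpl; ring.
Qed.

Lemma Cseries_single (f : nat -> C) k : (forall m, m <> k -> f m = 0%C) -> Cseries f = f k.
Proof.
  intros Hf. unfold Cseries. apply injective_projections; cbn [fst snd]; apply is_series_unique.
  - apply (is_series_single (fun n => Re (f n))). intros m Hm; rewrite Hf; auto.
  - apply (is_series_single (fun n => Im (f n))). intros m Hm; rewrite Hf; auto.
Qed.

Section L2.
Variables (I : Type) (en : nat -> I) (dec : forall a b : I, {a = b} + {a <> b}) (idx : I -> nat).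
Hypotheses (en_idx : forall i, en (idx i) = i) (idx_en : forall n, idx (en n) = n).

Lemma ip_Cseries x y : ip I en x y = Cseries (fun n => Cconj (x (en n)) * y (en n))%C.
Proof. reflexivity. Qed.

Lemma ex_series_Cmod_prod x y : l2 I en x -> l2 I en y ->
  ex_series (fun n => Cmod (Cconj (x (en n)) * y (en n))%C).
Proof.
  intros Hx Hy.
  apply (ex_series_nonneg_le _ (fun n => / 2 * Cmod (x (en n)) ^ 2 + / 2 * Cmod (y (en n)) ^ 2));
    [|apply ex_series_lin; assumption].
  intro n. rewrite Cmod_mult, Cmod_conj.
  pose proof (Cmod_ge_0 (x (en n))). pose proof (Cmod_ge_0 (y (en n))).
  pose proof (pow2_ge_0 (Cmod (x (en n)) - Cmod (y (en n)))). split; nra.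
Qed.

Lemma l2_zero : l2 I en (fun _ => 0%C).
Proof.
  exists 0. apply (is_series_ext (fun _ => 0)); [intro; rewrite Cmod_0; simpl; ring|].
  exact is_series_zero.
Qed.

Lemma l2_vadd x y : l2 I en x -> l2 I en y -> l2 I en (vadd I x y).
Proof.
  intros Hx Hy.
  apply (ex_series_nonneg_le _ (fun n => 2 * Cmod (x (en n)) ^ 2 + 2 * Cmod (y (en n)) ^ 2));
    [|apply ex_series_lin; assumption].
  intro n. unfold vadd. pose proof (Cmod_triangle (x (en n)) (y (en n))).
  pose proof (Cmod_ge_0 (x (en n))). pose proof (Cmod_ge_0 (y (en n))).
  pose proof (Cmod_ge_0 (x (en n) + y (en n))%C).
  pose proof (pow2_ge_0 (Cmod (x (en n)) - Cmod (y (en n)))). split; nra.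
Qed.

Lemma l2_vscal c x : l2 I en x -> l2 I en (vscal I c x).
Proof.
  intros Hx. apply (ex_series_ext (fun n => Cmod c ^ 2 * Cmod (x (en n)) ^ 2)).
  - intro n. unfold vscal. rewrite Cmod_mult. symmetry. apply Rpow_mult_distr.
  - exact (ex_series_scal_l (Cmod c ^ 2) _ Hx).
Qed.

Lemma ebasis_same a : ebasis I dec a a = 1%C.
Proof. unfold ebasis. destruct (dec a a); congruence. Qed.

Lemma ebasis_en_neq a m : m <> idx a -> ebasis I dec a (en m) = 0%C.
Proof.
  intros Hm. unfold ebasis. destruct (dec a (en m)) as [->|]; [|reflexivity].
  exfalso; apply Hm; rewrite idx_en; reflexivity.
Qed.

Lemma l2_ebasis a : l2 I en (ebasis I dec a).
Proof.
  eexists. apply (is_series_single (fun n => Cmod (ebasis I dec a (en n)) ^ 2) (idx a)).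
  intros m Hm. rewrite ebasis_en_neq, Cmod_0 by exact Hm. ring.
Qed.

Lemma ip_conj x y : ip I en y x = Cconj (ip I en x y).
Proof.
  rewrite !ip_Cseries, <- Cseries_conj. apply Cseries_ext; intro n.
  rewrite Cmult_conj, Cconj_conj. ring.
Qed.

Lemma ip_ebasis_l a v : ip I en (ebasis I dec a) v = v a.
Proof.
  rewrite ip_Cseries, (Cseries_single _ (idx a)).
  - rewrite en_idx, ebasis_same, Cconj_RtoC. ring.
  - intros m Hm. rewrite ebasis_en_neq, Cconj_RtoC by exact Hm. ring.
Qed.

Lemma ip_ebasis_r v a : ip I en v (ebasis I dec a) = Cconj (v a).
Proof. rewrite ip_conj, ip_ebasis_l. reflexivity. Qed.

Lemma ip_self x : ip I en x x = RtoC (Series (fun n => Cmod (x (en n)) ^ 2)).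
Proof.
  rewrite ip_Cseries, <- Cseries_RtoC. apply Cseries_ext; intro n.
  rewrite Cmod2_conj. ring.
Qed.

Lemma ip_plusr x y z : l2 I en x -> l2 I en y -> l2 I en z ->
  ip I en x (vadd I y z) = (ip I en x y + ip I en x z)%C.
Proof.
  intros Hx Hy Hz. rewrite !ip_Cseries, <- Cseries_plus by auto using ex_series_Cmod_prod.
  apply Cseries_ext; intro n. unfold vadd. ring.
Qed.

Lemma ip_scalr c x y : l2 I en x -> l2 I en y -> ip I en x (vscal I c y) = (c * ip I en x y)%C.
Proof.
  intros Hx Hy. rewrite !ip_Cseries, <- Cseries_scal by auto using ex_series_Cmod_prod.
  apply Cseries_ext; intro n. unfold vscal. ring.
Qed.

Lemma ip_plusl x y z : l2 I en x -> l2 I en y -> l2 I en z ->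
  ip I en (vadd I x y) z = (ip I en x z + ip I en y z)%C.
Proof.
  intros Hx Hy Hz. rewrite ip_conj, ip_plusr, Cplus_conj, <- !ip_conj by assumption.
  reflexivity.
Qed.

Lemma ip_scall c x y : l2 I en x -> l2 I en y ->
  ip I en (vscal I c x) y = (Cconj c * ip I en x y)%C.
Proof.
  intros Hx Hy. rewrite ip_conj, ip_scalr, Cmult_conj, <- ip_conj by assumption.
  reflexivity.
Qed.

Lemma bop_l2 A x : bop I en A -> l2 I en x -> l2 I en (A x).
Proof. intros [_ [HA _]] Hx. exact (HA x Hx). Qed.

Lemma bop_lincomb A x y a : bop I en A -> l2 I en x -> l2 I en y ->
  A (vadd I x (vscal I a y)) = vadd I (A x) (vscal I a (A y)).
Proof. intros [HA _] Hx Hy. apply functional_extensionality; intro i. apply HA; assumption. Qed.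

Lemma bop_zero A : bop I en A -> A (fun _ => 0%C) = (fun _ => 0%C).
Proof.
  intros HA. apply functional_extensionality; intro i.
  pose proof (f_equal (fun v => v i) (bop_lincomb A _ _ 1%C HA l2_zero l2_zero)) as H.
  replace (vadd I (fun _ => 0%C) (vscal I 1%C (fun _ => 0%C))) with (fun _ : I => RtoC 0) in H
    by (apply functional_extensionality; intro; unfold vadd, vscal; ring).
  unfold vadd, vscal in H. set (z := A _ i) in H |- *.
  replace z with (z + 1 * z - z)%C by ring. rewrite <- H. ring.
Qed.

Lemma bop_vscal A c x : bop I en A -> l2 I en x -> A (vscal I c x) = vscal I c (A x).
Proof.
  intros HA Hx. pose proof (bop_lincomb A _ _ c HA l2_zero Hx) as H.
  rewrite bop_zero in H by exact HA.
  replace (vadd I (fun _ => 0%C) (vscal I c x)) with (vscal I c x) in H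
    by (apply functional_extensionality; intro; unfold vadd; ring).
  rewrite H. apply functional_extensionality; intro; unfold vadd; ring.
Qed.

Lemma bop_id : bop I en (fun x => x).
Proof.
  split; [intros x y a _ _ i; reflexivity|].
  split; [auto|]. exists 1. intros x _. lra.
Qed.

Lemma ip_quad P u v a : bop I en P -> l2 I en u -> l2 I en v ->
  ip I en (vadd I u (vscal I a v)) (P (vadd I u (vscal I a v))) =
  (ip I en u (P u) + a * ip I en u (P v) + Cconj a * ip I en v (P u)
   + Cconj a * a * ip I en v (P v))%C.
Proof.
  intros HP Hu Hv. rewrite bop_lincomb by assumption.
  assert (Hpu := bop_l2 P u HP Hu). assert (Hpv := bop_l2 P v HP Hv).
  rewrite ip_plusl, ip_scall, !ip_plusr, !ip_scalr by auto using l2_vscal, l2_vadd.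
  ring.
Qed.

Lemma positive_ip_conj P u v : bop I en P -> positive I en P -> l2 I en u -> l2 I en v ->
  ip I en u (P v) = Cconj (ip I en v (P u)).
Proof.
  intros HP Hpos Hu Hv.
  destruct (Hpos _ (l2_vadd _ _ Hu (l2_vscal 1%C _ Hv))) as [Im1 _].
  destruct (Hpos _ (l2_vadd _ _ Hu (l2_vscal Ci _ Hv))) as [Imi _].
  rewrite ip_quad in Im1, Imi by assumption.
  destruct (Hpos _ Hu) as [Imu _]. destruct (Hpos _ Hv) as [Imv _].
  destruct (ip I en u (P u)) as [a1 a2], (ip I en u (P v)) as [s1 s2],
    (ip I en v (P u)) as [w1 w2], (ip I en v (P v)) as [b1 b2].
  unfold Im, Ci, Cconj in *; simpl in *. apply injective_projections; simpl; lra.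
Qed.

Lemma positive_Cauchy_Schwarz P u v : bop I en P -> positive I en P -> l2 I en u -> l2 I en v ->
  Cmod (ip I en u (P v)) ^ 2 <= Re (ip I en u (P u)) * Re (ip I en v (P v)).
Proof.
  intros HP Hpos Hu Hv.
  destruct (Hpos _ Hu) as [_ HA]. destruct (Hpos _ Hv) as [_ HB].
  set (s := ip I en u (P v)).
  apply le_of_quadratic_nonneg; [exact HA|exact HB|apply pow2_ge_0|]. intro l.
  (* the form at [u - l conj(s) v] *)
  destruct (Hpos _ (l2_vadd _ _ Hu (l2_vscal (- RtoC l * Cconj s)%C _ Hv))) as [_ Hq].
  rewrite ip_quad, (positive_ip_conj P v u) in Hq by assumption. fold s in Hq.
  rewrite Cmod2_alt.
  destruct (ip I en u (P u)) as [a1 a2], s as [s1 s2], (ip I en v (P v)) as [b1 b2].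
  unfold Re, Im, Cconj in *; simpl in *. nra.
Qed.

Lemma ip_Cauchy_Schwarz u v : l2 I en u -> l2 I en v ->
  Cmod (ip I en u v) ^ 2 <=
  Series (fun n => Cmod (u (en n)) ^ 2) * Series (fun n => Cmod (v (en n)) ^ 2).
Proof.
  intros Hu Hv.
  assert (Hid : positive I en (fun x => x)).
  { intros x Hx. rewrite ip_self. split; [reflexivity|].
    apply Series_nonneg; [intro; apply pow2_ge_0|exact Hx]. }
  pose proof (positive_Cauchy_Schwarz _ u v bop_id Hid Hu Hv) as H.
  rewrite !ip_self in H. exact H.
Qed.

Lemma tnorm_bop A t : tnorm I en dec A t -> bop I en A.
Proof. intros [HA _]; exact HA. Qed.

(* With P = |A|, the b-th column of A has squared norm <e_b, P^2 e_b>, and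
   |<e_m, P e_b>|^2 <= <e_m, P e_m> <e_b, P e_b> bounds it by <e_b, P e_b> Tr P. *)
Lemma tnorm_column_le A t : tnorm I en dec A t ->
  exists d : I -> R, (forall b, 0 <= d b) /\ is_series (fun n => d (en n)) t /\
    forall b, Series (fun m => Cmod (A (ebasis I dec b) (en m)) ^ 2) <= d b * t.
Proof.
  intros [HA [B [P [[HB Hadj] [HP [Hpos [HPP Htr]]]]]]].
  exists (fun b => Re (ip I en (ebasis I dec b) (P (ebasis I dec b)))).
  split; [intro b; apply (Hpos _ (l2_ebasis b))|split; [exact Htr|intro b]].
  pose proof (l2_ebasis b) as Heb.
  assert (Hcol : ip I en (A (ebasis I dec b)) (A (ebasis I dec b)) =
                 ip I en (P (ebasis I dec b)) (P (ebasis I dec b))).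
  { rewrite <- Hadj, ip_ebasis_r, <- HPP, <- ip_ebasis_l by auto using bop_l2.
    rewrite (positive_ip_conj P _ (P _)), Cconj_conj by auto using bop_l2.
    reflexivity. }
  rewrite !ip_self in Hcol. apply RtoC_inj in Hcol. rewrite Hcol.
  rewrite (Rmult_comm _ t), <- (is_series_unique _ _ Htr), <- Series_scal_r.
  apply Series_le; [|apply ex_series_scal_r; exists t; exact Htr].
  intro m. split; [apply pow2_ge_0|].
  rewrite <- (ip_ebasis_l (en m) (P _)).
  apply positive_Cauchy_Schwarz; auto using l2_ebasis.
Qed.

Lemma tnorm_nonneg A t : tnorm I en dec A t -> 0 <= t.
Proof.
  intros Ht. destruct (tnorm_column_le A t Ht) as [d [Hd [Hs _]]].
  apply Rle_trans with (d (en 0%nat)); [apply Hd|].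
  apply (term_le_is_series (fun n => d (en n))); auto.
Qed.

Lemma tnorm_entry_le A t a b : tnorm I en dec A t -> Cmod (A (ebasis I dec b) a) <= t.
Proof.
  intros Ht. pose proof (tnorm_nonneg A t Ht) as Ht0.
  destruct (tnorm_column_le A t Ht) as [d [Hd [Hs Hcol]]].
  assert (Hentry : Cmod (A (ebasis I dec b) (en (idx a))) ^ 2 <= d b * t).
  { eapply Rle_trans; [|apply Hcol].
    apply (term_le_is_series (fun m => Cmod (A (ebasis I dec b) (en m)) ^ 2));
      [intro; apply pow2_ge_0|apply Series_correct, bop_l2; eauto using tnorm_bop, l2_ebasis]. }
  assert (Hdb : d b <= t).
  { rewrite <- (en_idx b). apply (term_le_is_series (fun n => d (en n))); auto. }
  rewrite en_idx in Hentry. pose proof (Hd b). pose proof (Cmod_ge_0 (A (ebasis I dec b) a)).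
  nra.
Qed.

Lemma tnorm_hs_le A t N : tnorm I en dec A t ->
  sum_n (fun k => sum_n (fun j => Cmod (A (ebasis I dec (en k)) (en j)) ^ 2) N) N <= t * t.
Proof.
  intros Ht. pose proof (tnorm_nonneg A t Ht) as Ht0.
  destruct (tnorm_column_le A t Ht) as [d [Hd [Hs Hcol]]].
  apply Rle_trans with (sum_n (fun k => d (en k) * t) N).
  - apply sum_n_le; intro k. eapply Rle_trans; [|apply Hcol].
    apply sum_n_le_is_series; [intro; apply pow2_ge_0|].
    apply Series_correct, bop_l2; eauto using tnorm_bop, l2_ebasis.
  - apply sum_n_le_is_series; [intro k; pose proof (Hd (en k)); nra|].
    apply is_series_scal_r, Hs.
Qed.

Section RankOne.
Variable psi : vec I.
Hypothesis psi_unit : is_series (fun n => Cmod (psi (en n)) ^ 2) 1.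

Definition rank_one_proj : op I := fun x => vscal I (ip I en psi x) psi.

Lemma l2_unit : l2 I en psi.
Proof. exists 1; exact psi_unit. Qed.

Lemma l2norm_vscal_unit c : l2norm I en (vscal I c psi) = Cmod c.
Proof.
  unfold l2norm, vscal.
  rewrite (Series_ext _ (fun n => Cmod c ^ 2 * Cmod (psi (en n)) ^ 2))
    by (intro; rewrite Cmod_mult; ring).
  rewrite Series_scal_l, (is_series_unique _ _ psi_unit), Rmult_1_r.
  apply sqrt_pow2, Cmod_ge_0.
Qed.

Lemma rank_one_bop : bop I en rank_one_proj.
Proof.
  split; [|split].
  - intros x y a Hx Hy i. unfold rank_one_proj.
    rewrite ip_plusr, ip_scalr by auto using l2_unit, l2_vscal. unfold vscal; ring.
  - intros x _. apply l2_vscal, l2_unit.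
  - exists 1. intros x Hx. unfold rank_one_proj. rewrite l2norm_vscal_unit, Rmult_1_l.
    unfold l2norm. rewrite <- (sqrt_pow2 (Cmod _)) by apply Cmod_ge_0.
    apply sqrt_le_1_alt. rewrite <- (Rmult_1_l (Series _)), <- (is_series_unique _ _ psi_unit).
    apply ip_Cauchy_Schwarz; auto using l2_unit.
Qed.

Lemma rank_one_adjoint : adjoint I en rank_one_proj rank_one_proj.
Proof.
  split; [exact rank_one_bop|]. intros x y Hx Hy. unfold rank_one_proj.
  rewrite ip_scall, ip_scalr, (ip_conj psi x) by auto using l2_unit. ring.
Qed.

Lemma rank_one_positive : positive I en rank_one_proj.
Proof.
  intros x Hx. unfold rank_one_proj.
  rewrite ip_scalr, (ip_conj psi x), <- Cmod2_conj by auto using l2_unit.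
  split; [reflexivity|apply pow2_ge_0].
Qed.

Lemma rank_one_trace :
  is_series (fun n => Re (ip I en (ebasis I dec (en n)) (rank_one_proj (ebasis I dec (en n))))) 1.
Proof.
  apply (is_series_ext (fun n => Cmod (psi (en n)) ^ 2)); [|exact psi_unit].
  intro n. rewrite ip_ebasis_l. unfold rank_one_proj, vscal.
  rewrite ip_ebasis_r, Cmult_comm, <- Cmod2_conj. reflexivity.
Qed.

Lemma rank_one_tnorm : tnorm I en dec rank_one_proj 1.
Proof.
  split; [exact rank_one_bop|]. exists rank_one_proj, rank_one_proj.
  split; [exact rank_one_adjoint|]. split; [exact rank_one_bop|].
  split; [exact rank_one_positive|]. split; [reflexivity|exact rank_one_trace].
Qed.

Lemma rank_one_density : density I en dec rank_one_proj.
Proof.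
  split; [exists 1; exact rank_one_tnorm|]. split; [exact rank_one_positive|].
  split; [exact rank_one_trace|].
  apply (is_series_ext (fun _ => 0)); [|exact is_series_zero].
  intro n. symmetry. apply rank_one_positive, l2_ebasis.
Qed.

End RankOne.
End L2.

Lemma l2_ebasis1 m : l2 nat (fun k => k) (ebasis nat nat_dec m).
Proof. apply (l2_ebasis nat (fun k => k) nat_dec (fun k => k)); reflexivity. Qed.

Lemma tnorm1_nonneg X a : tnorm1 X a -> 0 <= a.
Proof. apply (tnorm_nonneg nat (fun k => k) nat_dec (fun k => k)); reflexivity. Qed.

Lemma tnorm1_hs_le X a N : tnorm1 X a ->
  sum_n (fun m => sum_n (fun n => Cmod (X (ebasis nat nat_dec m) n) ^ 2) N) N <= a * a.
Proof. apply (tnorm_hs_le nat (fun k => k) nat_dec (fun k => k)); reflexivity. Qed.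

Lemma tnorm2_entry_le M t p q : tnorm2 M t -> Cmod (M (ebasis _ pair_dec p) q) <= t.
Proof. apply (tnorm_entry_le _ of_nat pair_dec to_nat); [apply cancel_of_to|apply cancel_to_of]. Qed.

(* <Omega_N, M Omega_N> for Omega_N = sum_(m <= N) e_m (x) e_m. *)
Definition entangled_form (M : op (nat * nat)) (N : nat) : C :=
  sum_n (fun m => sum_n (fun n => M (ebasis _ pair_dec (m, m)) (n, n)) N) N.

Lemma entangled_form_lin (M1 M2 : op (nat * nat)) c N :
  entangled_form (fun x p => M1 x p + c * M2 x p)%C N =
  (entangled_form M1 N + c * entangled_form M2 N)%C.
Proof.
  unfold entangled_form. rewrite <- sum_n_Clin. apply sum_n_ext; intro m.
  apply sum_n_Clin.
Qed.

Lemma entangled_form_zero N : entangled_form (fun _ _ => 0%C) N = 0%C.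
Proof.
  unfold entangled_form.
  rewrite (sum_n_ext _ (fun _ => zero)); [exact (sum_n_m_const_zero (G := C_AbelianMonoid) 0 N)|].
  intro m. exact (sum_n_m_const_zero (G := C_AbelianMonoid) 0 N).
Qed.

Lemma entangled_form_le_tnorm M t N : tnorm2 M t -> Cmod (entangled_form M N) <= INR (S N) ^ 2 * t.
Proof.
  intros Ht. unfold entangled_form. eapply Rle_trans; [apply sum_n_Cmod_le|].
  eapply Rle_trans; [apply sum_n_le; intro m; apply sum_n_Cmod_le|].
  eapply Rle_trans; [apply sum_n_le; intro m; apply sum_n_le; intro n;
                     apply (tnorm2_entry_le M t _ _ Ht)|].
  rewrite (sum_n_ext _ (fun _ => INR (S N) * t)) by (intro; apply sum_n_const).
  rewrite sum_n_const. right; ring.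
Qed.

Lemma tens_ebasis_diag X Y m n : bop nat (fun k => k) X -> bop nat (fun k => k) Y ->
  tens X Y (ebasis _ pair_dec (m, m)) (n, n) =
  (X (ebasis nat nat_dec m) n * Y (ebasis nat nat_dec m) n)%C.
Proof.
  intros HX HY.
  assert (Hrow : (fun i => Y (fun j => ebasis _ pair_dec (m, m) (i, j)) n) =
                 vscal nat (Y (ebasis nat nat_dec m) n) (ebasis nat nat_dec m)).
  { apply functional_extensionality; intro i. unfold vscal.
    destruct (Nat.eq_dec i m) as [->|Him].
    - rewrite (ebasis_same nat nat_dec).
      replace (fun j => ebasis _ pair_dec (m, m) (m, j)) with (ebasis nat nat_dec m); [ring|].
      apply functional_extensionality; intro j. unfold ebasis.
      destruct (pair_dec (m, m) (m, j)), (nat_dec m j); congruence.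
    - replace (fun j => ebasis _ pair_dec (m, m) (i, j)) with (fun _ : nat => RtoC 0).
      + rewrite (bop_zero nat (fun k => k) Y HY). unfold ebasis.
        destruct (nat_dec m i); [congruence|ring].
      + apply functional_extensionality; intro j. unfold ebasis.
        destruct (pair_dec (m, m) (i, j)); congruence. }
  simpl. rewrite Hrow, (bop_vscal nat (fun k => k) X) by auto using l2_ebasis1.
  unfold vscal. ring.
Qed.

Lemma entangled_form_tens_le X Y a b N : tnorm1 X a -> tnorm1 Y b -> 0 < a * b ->
  Cmod (entangled_form (tens X Y) N) <= a * b.
Proof.
  intros HX HY Hab.
  pose proof (tnorm1_nonneg X a HX). pose proof (tnorm1_nonneg Y b HY).
  assert (Ha : 0 < a) by nra. assert (Hb : 0 < b) by nra.
  set (x m n := Cmod (X (ebasis nat nat_dec m) n)).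
  set (y m n := Cmod (Y (ebasis nat nat_dec m) n)).
  unfold entangled_form. eapply Rle_trans; [apply sum_n_Cmod_le|].
  eapply Rle_trans; [apply sum_n_le; intro m; apply sum_n_Cmod_le|].
  (* AM-GM, weighted so that both halves are at most [a b / 2] *)
  apply Rle_trans with
    (sum_n (fun m => sum_n (fun n => b / (2 * a) * x m n ^ 2 + a / (2 * b) * y m n ^ 2) N) N).
  { apply sum_n_le; intro m; apply sum_n_le; intro n.
    rewrite tens_ebasis_diag, Cmod_mult by (eapply tnorm_bop; eassumption).
    fold (x m n) (y m n). pose proof (pow2_ge_0 (b * x m n - a * y m n)).
    apply Rmult_le_reg_l with (2 * a * b); [nra|].
    replace (2 * a * b * (b / (2 * a) * x m n ^ 2 + a / (2 * b) * y m n ^ 2))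
      with (b * b * x m n ^ 2 + a * a * y m n ^ 2) by (field; lra).
    nra. }
  rewrite (sum_n_ext _ (fun m => b / (2 * a) * sum_n (fun n => x m n ^ 2) N
                                 + a / (2 * b) * sum_n (fun n => y m n ^ 2) N))
    by (intro; apply sum_n_lin).
  rewrite sum_n_lin.
  pose proof (tnorm1_hs_le X a N HX). pose proof (tnorm1_hs_le Y b N HY).
  apply Rle_trans with (b / (2 * a) * (a * a) + a / (2 * b) * (b * b)); [|right; field; lra].
  apply Rplus_le_compat; apply Rmult_le_compat_l; auto; left; apply Rdiv_lt_0_compat; lra.
Qed.

(* [sum_n r K] also counts [r K], which [psum r X Y K] leaves out. *)
Lemma entangled_form_psum_le r X Y K N : (forall k, 0 <= r k) ->
  (forall k, exists a b, tnorm1 (X k) a /\ tnorm1 (Y k) b /\ a * b = 1) ->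
  Cmod (entangled_form (psum r X Y K) N) + r K <= sum_n r K.
Proof.
  intros Hr HXY. induction K as [|K IH].
  - simpl psum. rewrite entangled_form_zero, Cmod_0, sum_O. lra.
  - simpl psum. rewrite entangled_form_lin, sum_n_SR.
    destruct (HXY K) as [a [b [Ha [Hb Hab]]]].
    pose proof (entangled_form_tens_le (X K) (Y K) a b N Ha Hb ltac:(lra)).
    eapply Rle_trans; [apply Rplus_le_compat_r, Cmod_triangle|].
    rewrite Cmod_mult, Cmod_R, Rabs_pos_eq by apply Hr.
    pose proof (Hr K). pose proof (Hr (S K)). nra.
Qed.

Lemma cross_entangled_form_bounded M : cross M -> exists B, forall N, Cmod (entangled_form M N) <= B.
Proof.
  intros [_ [r [X [Y [Hr [Hrs [HXY Hconv]]]]]]].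
  exists (Series r + 1). intro N.
  assert (Hw : 0 < INR (S N) ^ 2) by (apply pow_lt, lt_0_INR; lia).
  destruct (Hconv (/ INR (S N) ^ 2)) as [K HK]; [apply Rinv_0_lt_compat, Hw|].
  destruct (HK K (le_n K)) as [t [Ht Htw]].
  replace M with (fun x p => osub _ M (psum r X Y K) x p + 1 * psum r X Y K x p)%C
    by (apply functional_extensionality; intro x; apply functional_extensionality; intro p;
        unfold osub; ring).
  rewrite entangled_form_lin. eapply Rle_trans; [apply Cmod_triangle|].
  rewrite Cmod_mult, Cmod_1, Rmult_1_l.
  pose proof (entangled_form_le_tnorm _ t N Ht).
  pose proof (entangled_form_psum_le r X Y K N Hr HXY).
  pose proof (sum_n_le_is_series r (Series r) K Hr (Series_correct r Hrs)).
  pose proof (Hr K).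
  assert (INR (S N) ^ 2 * t <= 1).
  { apply Rle_trans with (INR (S N) ^ 2 * / INR (S N) ^ 2); [apply Rmult_le_compat_l; lra|].
    rewrite Rinv_r; lra. }
  lra.
Qed.

Lemma to_nat_diag_incr k : (to_nat (k, k) < to_nat (S k, S k))%nat.
Proof. pose proof (to_nat_spec k k). pose proof (to_nat_spec (S k) (S k)). nia. Qed.

Section DiagonalState.
Variable c : nat -> R.

Definition diag_vector : vec (nat * nat) :=
  fun p => if Nat.eq_dec (fst p) (snd p) then RtoC (c (fst p)) else RtoC 0.

Definition diag_state : op (nat * nat) := rank_one_proj (nat * nat) of_nat diag_vector.

Lemma diag_vector_unit : is_series (fun n => c n ^ 2) 1 ->
  is_series (fun n => Cmod (diag_vector (of_nat n)) ^ 2) 1.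
Proof.
  intros Hc.
  apply (is_series_sparse (fun k => c k ^ 2) _ (fun k => to_nat (k, k)));
    [exact to_nat_diag_incr| | |intro; apply pow2_ge_0|exact Hc].
  - intro k. rewrite cancel_of_to. unfold diag_vector; cbn [fst snd].
    destruct (Nat.eq_dec k k) as [_|]; [|congruence]. rewrite Cmod_R, pow2_abs. reflexivity.
  - intros m Hm. unfold diag_vector. destruct (of_nat m) as [i j] eqn:Em; cbn [fst snd].
    destruct (Nat.eq_dec i j) as [<-|]; [|rewrite Cmod_0; ring].
    exfalso. apply (Hm i). rewrite <- Em, cancel_to_of. reflexivity.
Qed.

Lemma diag_state_density : is_series (fun n => c n ^ 2) 1 -> density2 diag_state.
Proof.
  intros Hc. apply (rank_one_density _ of_nat pair_dec to_nat cancel_of_to cancel_to_of).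
  exact (diag_vector_unit Hc).
Qed.

Lemma entangled_form_diag_state N : entangled_form diag_state N = RtoC (sum_n c N ^ 2).
Proof.
  unfold entangled_form.
  rewrite (sum_n_ext _ (fun m => RtoC (c m * sum_n c N))).
  - rewrite sum_n_RtoC. f_equal.
    rewrite (sum_n_ext _ (fun m => sum_n c N * c m)) by (intro; apply Rmult_comm).
    rewrite (sum_n_mult_l (K := R_Ring)), <- Rsqr_pow2. reflexivity.
  - intro m. rewrite (sum_n_ext _ (fun n => RtoC (c m * c n))).
    + rewrite sum_n_RtoC, (sum_n_mult_l (K := R_Ring)). reflexivity.
    + intro n. unfold diag_state, rank_one_proj, vscal.
      rewrite (ip_ebasis_r _ of_nat pair_dec to_nat cancel_of_to cancel_to_of).
      unfold diag_vector; cbn [fst snd].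
      destruct (Nat.eq_dec m m), (Nat.eq_dec n n); try congruence.
      rewrite Cconj_RtoC. apply injective_projections; simpl; ring.
Qed.

Lemma diag_state_not_cross : (forall B, exists N, B < sum_n c N) -> ~ cross diag_state.
Proof.
  intros Hc Hcross. destruct (cross_entangled_form_bounded _ Hcross) as [B HB].
  destruct (Hc (Rmax 1 B)) as [N HN].
  specialize (HB N).
  rewrite entangled_form_diag_state, Cmod_R, Rabs_pos_eq in HB by apply pow2_ge_0.
  pose proof (Rmax_l 1 B). pose proof (Rmax_r 1 B). nra.
Qed.

End DiagonalState.

Lemma inv_sq_pos n : 0 < / INR (S n) ^ 2.
Proof. apply Rinv_0_lt_compat, pow_lt, lt_0_INR; lia. Qed.

Lemma ex_series_inv_sq : ex_series (fun n => / INR (S n) ^ 2).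
Proof.
  apply (ex_series_nonneg_bounded _ 2); [intro; left; apply inv_sq_pos|].
  (* telescoping against 1/(n+1) - 1/(n+2) *)
  assert (H : forall N, sum_n (fun n => / INR (S n) ^ 2) N <= 2 - / INR (S N)).
  { induction N as [|N IH]; [rewrite sum_O; simpl; lra|].
    rewrite sum_n_SR, (S_INR (S N)).
    assert (Hu : 0 < INR (S N)) by (apply lt_0_INR; lia).
    assert (/ (INR (S N) + 1) ^ 2 <= / INR (S N) - / (INR (S N) + 1)).
    { replace (/ INR (S N) - / (INR (S N) + 1)) with (/ (INR (S N) * (INR (S N) + 1)))
        by (field; lra).
      apply Rinv_le_contravar; nra. }
    lra. }
  intro N. specialize (H N). assert (0 < / INR (S N)) by (apply Rinv_0_lt_compat, lt_0_INR; lia).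
  lra.
Qed.

Lemma ln_succ_le u : 0 < u -> ln (u + 1) <= ln u + / u.
Proof.
  intros Hu. replace (u + 1) with (u * (1 + / u)) by (field; lra).
  assert (0 < / u) by (apply Rinv_0_lt_compat; lra).
  rewrite ln_mult by lra. apply Rplus_le_compat_l. rewrite <- (ln_exp (/ u)) at 2.
  apply ln_le; [lra|apply exp_ineq1_le].
Qed.

Lemma ln_le_sum_n_harmonic N : ln (INR N + 2) <= sum_n (fun n => / INR (S n)) N.
Proof.
  induction N as [|N IH].
  - rewrite sum_O. pose proof (ln_succ_le 1 ltac:(lra)) as H. rewrite ln_1 in H.
    simpl. replace (0 + 2) with (1 + 1) by ring. lra.
  - rewrite sum_n_SR, S_INR, !S_INR. pose proof (pos_INR N).
    replace (INR N + 1 + 2) with ((INR N + 2) + 1) by ring.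
    replace (INR N + 1 + 1) with (INR N + 2) by ring.
    pose proof (ln_succ_le (INR N + 2) ltac:(lra)). lra.
Qed.

Definition harmonic_sq_sum : R := Series (fun n => / INR (S n) ^ 2).

Definition unit_harmonic (n : nat) : R := / INR (S n) / sqrt harmonic_sq_sum.

Lemma harmonic_sq_sum_pos : 0 < harmonic_sq_sum.
Proof.
  apply Rlt_le_trans with (/ INR 1 ^ 2); [simpl; lra|].
  apply (term_le_is_series (fun n => / INR (S n) ^ 2)); [intro; left; apply inv_sq_pos|].
  apply Series_correct, ex_series_inv_sq.
Qed.

Lemma unit_harmonic_unit : is_series (fun n => unit_harmonic n ^ 2) 1.
Proof.
  pose proof harmonic_sq_sum_pos.
  replace 1 with (harmonic_sq_sum * / harmonic_sq_sum) by (field; lra).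
  apply (is_series_ext (fun n => / INR (S n) ^ 2 * / harmonic_sq_sum)).
  - intro n. change (/ INR (S n) ^ 2 * / harmonic_sq_sum = unit_harmonic n ^ 2 :> R).
    unfold unit_harmonic. rewrite <- (pow2_sqrt harmonic_sq_sum) at 1 by lra.
    assert (0 < sqrt harmonic_sq_sum) by (apply sqrt_lt_R0; lra).
    assert (0 < INR (S n)) by (apply lt_0_INR; lia). field. lra.
  - apply is_series_scal_r, Series_correct, ex_series_inv_sq.
Qed.

Lemma unit_harmonic_unbounded B : exists N, B < sum_n unit_harmonic N.
Proof.
  set (s := sqrt harmonic_sq_sum).
  assert (Hs : 0 < s) by apply sqrt_lt_R0, harmonic_sq_sum_pos.
  destruct (INR_unbounded (exp (B * s))) as [N HN]. exists N.
  assert (Hsum : sum_n unit_harmonic N = sum_n (fun n => / INR (S n)) N * / s)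
    by exact (sum_n_mult_r (K := R_Ring) (/ s) (fun n => / INR (S n)) N).
  rewrite Hsum. apply Rmult_lt_reg_r with s; [exact Hs|].
  rewrite Rmult_assoc, Rinv_l, Rmult_1_r by lra.
  eapply Rlt_le_trans; [|apply ln_le_sum_n_harmonic].
  rewrite <- (ln_exp (B * s)). apply ln_increasing; [apply exp_pos|lra].
Qed.

Theorem corollary3p31 :
  ((forall Cop : op (nat * nat), cross Cop -> TC2 Cop) /\
   (exists Cop : op (nat * nat), TC2 Cop /\ ~ cross Cop)) /\
  ((forall rho : op (nat * nat), cross_state rho -> density2 rho) /\
   (exists rho : op (nat * nat), density2 rho /\ ~ cross_state rho)).
Proof.
  pose proof (diag_state_density _ unit_harmonic_unit) as Hdensity.
  pose proof (diag_state_not_cross _ unit_harmonic_unbounded) as Hnot_cross.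
  split; split.
  - intros M [HM _]; exact HM.
  - exists (diag_state unit_harmonic). split; [exact (proj1 Hdensity)|exact Hnot_cross].
  - intros rho [Hrho _]; exact Hrho.
  - exists (diag_state unit_harmonic). split; [exact Hdensity|]. intros [_ H]; exact (Hnot_cross H).
Qed.
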